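(* Let $\mathbb F$ be any field. The problem of classifying two-dimensional vector subspaces $V\subset \mathbb F^{n\times n}$ ($n=1,2,\dots$) consisting of pairwise commuting matrices, up to similarity $V\mapsto S^{-1}VS:=\{S^{-1}AS\mid A\in V\}$ with nonsingular $S\in\mathbb F^{n\times n}$, is wild. Moreover, if $\mathbb F$ is not the field with two elements, then the problem of classifying, up to the same similarity, those two-dimensional vector spaces of commuting $n\times n$ matrices over $\mathbb F$ that contain a nonsingular matrix is also wild.
   Context: Two pairs $(M,N)$, $(M',N')$ of $n\times n$ matrices over $\mathbb F$ are similar if $(S^{-1}MS,S^{-1}NS)=(M',N')$ for some nonsingular $S$. A matrix classification problem $\mathcal M$ is given by a set $\mathcal M_1$ of tuples of matrices over $\mathbb F$ and a set $\mathcal M_2$ of admissible transformations on them. It is called wild if there is a tuple $M(x,y)=(M_1(x,y),\dots,M_t(x,y))$ of matrices whose entries are noncommutative polynomials in $x,y$ over $\mathbb F$ such that (i) $M(A,B)\in\mathcal M_1$ for all $A,B\in\mathbb F^{n\times n}$ and all $n\ge1$ (each scalar entry $\alpha$ being replaced by $\alpha I_n$), and (ii) $M(A,B)$ can be carried to $M(A',B')$ by transformations from $\mathcal M_2$ if and only if the pairs $(A,B)$ and $(A',B')$ are similar. (A two-dimensional space of matrices is represented by a basis $(A,B)$, determined up to change of basis.) *)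

From HB Require Import structures.
From mathcomp Require Import all_boot all_order all_algebra.
Set Implicit Arguments. Unset Strict Implicit. Unset Printing Implicit Defensive.
Import GRing.Theory.
Local Open Scope ring_scope.

Inductive ncpoly (F : Type) : Type :=
| NCconst of F
| NCx
| NCy
| NCadd of ncpoly F & ncpoly F
| NCmul of ncpoly F & ncpoly F.
Arguments NCx {F}. Arguments NCy {F}.

Fixpoint nceval (F : fieldType) (n : nat) (p : ncpoly F) (A B : 'M[F]_n) : 'M[F]_n :=
  match p with
  | NCconst c => c%:M
  | NCx => A
  | NCy => B
  | NCadd p q => nceval p A B + nceval q A B
  | NCmul p q => nceval p A B *m nceval q A B
  end.

Definition mxsubst (F : fieldType) (k n : nat) (P : 'I_k -> 'I_k -> ncpoly F)
  (A B : 'M[F]_n) : 'M[F]_(\sum_(i < k) n, \sum_(j < k) n) :=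
  \mxblock_(i < k, j < k) nceval (P i j) A B.

Definition simpair (F : fieldType) (n : nat) (A B A' B' : 'M[F]_n) : Prop :=
  exists2 S : 'M[F]_n, S \in unitmx &
    invmx S *m A *m S = A' /\ invmx S *m B *m S = B'.

Definition span2 (F : fieldType) (m : nat) (A B : 'M[F]_m) : Prop :=
  \rank (col_mx (mxvec A) (mxvec B)) = 2%N.

(* Objects of the problem: bases (A,B) of 2-dim spaces of commuting matrices *)
Definition comm_space (F : fieldType) (m : nat) (A B : 'M[F]_m) : Prop :=
  span2 A B /\ A *m B = B *m A.

Definition comm_space_nonsing (F : fieldType) (m : nat) (A B : 'M[F]_m) : Prop :=
  comm_space A B /\ exists a b : F, (a *: A + b *: B) \in unitmx.

(* Admissible transformations: similarity of the space, i.e. similarity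
   combined with change of basis (A,B) |-> (aA+bB, cA+dB), ad-bc <> 0. *)
Definition space_sim (F : fieldType) (m : nat) (A B A' B' : 'M[F]_m) : Prop :=
  exists a b c d : F, a * d - b * c != 0 /\
    simpair (a *: A + b *: B) (c *: A + d *: B) A' B'.

Definition wild (F : fieldType)
  (M1 : forall m, 'M[F]_m -> 'M[F]_m -> Prop)
  (M2 : forall m, 'M[F]_m -> 'M[F]_m -> 'M[F]_m -> 'M[F]_m -> Prop) : Prop :=
  exists (k : nat) (P1 P2 : 'I_k -> 'I_k -> ncpoly F),
    (forall (n : nat) (A B : 'M[F]_n), (0 < n)%N ->
        M1 _ (mxsubst P1 A B) (mxsubst P2 A B)) /\
    (forall (n : nat) (A B A' B' : 'M[F]_n), (0 < n)%N ->
        (M2 _ (mxsubst P1 A B) (mxsubst P2 A B) (mxsubst P1 A' B') (mxsubst P2 A' B')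
         <-> simpair A B A' B')).

From HB Require Import structures.
From mathcomp Require Import all_boot all_order all_algebra zify.
Set Implicit Arguments. Unset Strict Implicit. Unset Printing Implicit Defensive.
Import GRing.Theory.
Local Open Scope ring_scope.

(* On nine copies of F^n, with block
   weights 0,1,2,2,3,3,4,4,5, let M1 shift blocks along 0-1-2-4-6-8 and
   3-5-7-8 (raising weights by 1) and let M2 send block 0 to 3, 1 to 5, 2 to 7,
   4 to 8, block 3 to A(block 6) + B(block 7) and block 5 to (A+B)(block 8)
   (raising weights by 2).  Then M1 M2 = M2 M1, and on block 0 we have
   M1^5 = M1^3 M2 and M2^2 = M1^4 A + M1^2 M2 B.  Suppose a base change
   (aM1 + bM2, cM1 + dM2) followed by a similarity S carries the pencil of
   (A, B) to that of (A', B').  Since M2^3 = 0 while (cM1 + dM2)^3 has c^3 as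
   its lowest-weight part, c = 0.  Every block other than block 0 is reached
   from block 0 by M1 or M2, which raise weights, so the first block row of S
   vanishes off the corner P := S00, and P is invertible.  Comparing
   lowest-weight parts of the two identities above, transported by S, gives
   a^5 P = a^3 d P, d^2 A P = a^4 P A' and d^2 B P = a^2 d P B', hence d = a^2
   and P^-1 A P = A', P^-1 B P = B'.  For the second claim replace M1 by I + M1:
   the pencil contains a unit, and nilpotency of M1 and M2 forces the scalar
   parts of the base change to be trivial. *)

Section GradedBlockMatrices.
Variables (R : pzRingType) (k n : nat) (w : 'I_k -> nat).
Local Notation m := (\sum_(i < k) n)%N.
Implicit Types (M N L : 'M[R]_m) (r s : nat).

Definition blk_inj (j : 'I_k) : 'M[R]_(m, n) :=
  \mxcol_(i < k) ((if i == j then 1%:M else 0) : 'M[R]_n).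

Lemma submxblock_mul M N i j :
  submxblock (M *m N) i j = \sum_l submxblock M i l *m submxblock N l j.
Proof.
by rewrite -[M]submxblockK -[N]submxblockK mul_mxblock mxblockK !submxblockK.
Qed.

Lemma submxcol_mul_blocks q M (U : 'M[R]_(m, q)) i :
  submxcol (M *m U) i = \sum_l submxblock M i l *m submxcol U l.
Proof. by rewrite -{1}[M]submxblockK -{1}[U]submxcolK mul_mxblock_mxrow mxcolK. Qed.

Lemma submxcol_blk_inj i j : submxcol (blk_inj j) i = if i == j then 1%:M else 0.
Proof. exact: mxcolK. Qed.

Lemma submxcol_mul_blk_inj M i j : submxcol (M *m blk_inj j) i = submxblock M i j.
Proof.
rewrite submxcol_mul_blocks (bigD1 j) //= submxcol_blk_inj eqxx mulmx1.
by rewrite big1 ?addr0 // => l /negbTE ne_lj; rewrite submxcol_blk_inj ne_lj mulmx0.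
Qed.

Lemma mul_blk_inj M j : M *m blk_inj j = \mxcol_i submxblock M i j.
Proof. by rewrite -[LHS]submxcolK; apply/eq_mxcol => i; rewrite submxcol_mul_blk_inj. Qed.

Lemma mx_blk_injP M N : (forall j, M *m blk_inj j = N *m blk_inj j) -> M = N.
Proof. by move=> eMN; apply/mxblockP => i j; rewrite -!submxcol_mul_blk_inj eMN. Qed.

Lemma submxblock_scalar c i j :
  submxblock (c%:M : 'M[R]_m) i j = if i == j then c%:M else 0.
Proof.
rewrite -(mxdiagZ (p_ := fun _ => n)) /mxdiag mxblockK.
by case: (i == j) => //; rewrite conform_mx_id.
Qed.

Lemma submxblockZ c M i j : submxblock (c *: M) i j = c *: submxblock M i j.
Proof. by apply/matrixP => x y; rewrite !mxE. Qed.

Lemma submxcolZ q c (U : 'M[R]_(m, q)) i : submxcol (c *: U) i = c *: submxcol U i.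
Proof. by apply/matrixP => x y; rewrite !mxE. Qed.

Definition raising r M := forall i j, (w i < w j + r)%N -> submxblock M i j = 0.

Lemma raising0 r : raising r 0.
Proof. by move=> i j _; rewrite submxblock0. Qed.

Lemma raising1 : raising 0 1%:M.
Proof.
move=> i j; rewrite addn0 submxblock_scalar; case: eqP => // ->.
by rewrite ltnn.
Qed.

Lemma raisingW r s M : (s <= r)%N -> raising r M -> raising s M.
Proof. by move=> le_sr rM i j lt_ij; apply: rM; rewrite (leq_trans lt_ij) ?leq_add2l. Qed.

Lemma raisingD r M N : raising r M -> raising r N -> raising r (M + N).
Proof. by move=> rM rN i j lt_ij; rewrite submxblockD rM ?rN ?addr0. Qed.

Lemma raisingN r M : raising r M -> raising r (- M).
Proof. by move=> rM i j lt_ij; rewrite submxblockN rM ?oppr0. Qed.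

Lemma raisingZ r c M : raising r M -> raising r (c *: M).
Proof. by move=> rM i j lt_ij; rewrite submxblockZ rM ?scaler0. Qed.

Lemma raisingM r s M N : raising r M -> raising s N -> raising (r + s) (M *m N).
Proof.
move=> rM sN i j lt_ij; rewrite submxblock_mul big1 // => l _.
have [lt_il|le_li] := ltnP (w i) (w l + r); first by rewrite rM ?mul0mx.
by rewrite sN ?mulmx0 //; lia.
Qed.

Lemma raisingX r M e : raising r M -> raising (r * e) (M ^+ e).
Proof.
move=> rM; elim: e => [|e IHe]; first by rewrite muln0 expr0; exact: raising1.
by rewrite exprSr mulnS addnC -mulmxE; apply: raisingM.
Qed.

Lemma raising_eq0 r M : (forall i, w i < r)%N -> raising r M -> M = 0.
Proof.
move=> wr rM; apply/mxblockP => i j.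
by rewrite submxblock0 rM // (leq_trans (wr i)) ?leq_addl.
Qed.

Lemma submxcol_raising_eq0 q r M (U : 'M[R]_(m, q)) i :
  raising r M -> (w i < r)%N -> submxcol (M *m U) i = 0.
Proof.
move=> rM lt_ir; rewrite submxcol_mul_blocks big1 // => l _.
by rewrite rM ?mul0mx // (leq_trans lt_ir) ?leq_addl.
Qed.

Lemma raising_exprD_lead X Z e :
  raising 1 X -> raising 2 Z -> raising e.+1 ((X + Z) ^+ e - X ^+ e).
Proof.
move=> rX rZ; elim: e => [|e IHe]; first by rewrite !expr0 subrr; exact: raising0.
have -> : (X + Z) ^+ e.+1 - X ^+ e.+1 = ((X + Z) ^+ e - X ^+ e) * (X + Z) + X ^+ e * Z.
  by rewrite !exprSr mulrBl [X ^+ e * (X + Z)]mulrDr opprD addrA subrK.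
rewrite -!mulmxE; apply: raisingD.
  by rewrite -addn1; apply: raisingM => //; apply: raisingD => //; apply: raisingW rZ.
have := raisingM (raisingX (e := e) rX) rZ; rewrite mul1n addn2; exact.
Qed.

Lemma mul_blk_inj_raising_eq0 r M j :
  raising r M -> (forall i, w i < w j + r)%N -> M *m blk_inj j = 0.
Proof.
move=> rM lt_wj; rewrite mul_blk_inj -(mxcol0 (p_ := fun _ => n)).
by apply/eq_mxcol => i; rewrite rM.
Qed.

Variable i0 : 'I_k.
Hypothesis wt_pos : forall l, l != i0 -> (0 < w l)%N.

Lemma submxcol_leading q r M L (U : 'M[R]_(m, q)) i :
  raising r L -> raising r.+1 (M - L) -> (w i <= r)%N ->
  submxcol (M *m U) i = submxcol (L *m blk_inj i0) i *m submxcol U i0.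
Proof.
move=> rL rML le_ir; rewrite -[M](subrK L) mulmxDl submxcolD.
rewrite (submxcol_raising_eq0 _ rML) ?ltnS // add0r submxcol_mul_blk_inj.
rewrite submxcol_mul_blocks (bigD1 i0) //= big1 ?addr0 // => l ne_l.
by rewrite rL ?mul0mx // addnC -addn1 leq_add // wt_pos.
Qed.

Lemma submxcol_leading_self q r M (U : 'M[R]_(m, q)) i :
  raising r M -> (w i <= r)%N ->
  submxcol (M *m U) i = submxcol (M *m blk_inj i0) i *m submxcol U i0.
Proof. by move=> rM; apply: submxcol_leading rM _; rewrite subrr; apply: raising0. Qed.

End GradedBlockMatrices.

Lemma unitmx0F (R : comUnitRingType) p : (0 < p)%N -> (0 : 'M[R]_p) \notin unitmx.
Proof. by case: p => // p _; rewrite unitmxE det0 unitr0. Qed.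

Section GradedUnits.
Variables (F : fieldType) (k n : nat) (w : 'I_k -> nat).
Local Notation m := (\sum_(i < k) n)%N.
Local Notation raising := (raising w).
Implicit Types (M : 'M[F]_m).

Lemma raising_nilpotent M : raising 1 M -> M ^+ (\max_i w i).+1 = 0.
Proof.
move=> rM; have := raisingX (e := (\max_i w i).+1) rM.
rewrite mul1n; apply: raising_eq0 => i.
by rewrite ltnS leq_bigmax.
Qed.

Lemma unitmx_scalar_add_raising c M :
  (0 < m)%N -> raising 1 M -> (c%:M + M \in unitmx) = (c != 0).
Proof.
move=> m_gt0 rM; have [->|c_neq0] := eqVneq c 0.
  rewrite raddf0 add0r; apply/negP => uM.
  have uMX e : M ^+ e \in unitmx.
    by elim: e => [|e IHe]; rewrite ?unitmx1 // exprS -mulmxE unitmx_mul uM.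
  by have := uMX (\max_i w i).+1; rewrite raising_nilpotent // (negbTE (unitmx0F _ m_gt0)).
set N := - (c^-1 *: M); have rN : raising 1 N by apply/raisingN/raisingZ.
have -> : c%:M + M = c *: (1%:M - N).
  by rewrite opprK scalerDr scalerA divff // scale1r scale_scalar_mx mulr1.
rewrite unitmxZ ?unitfE //.
have: (1%:M - N) * \sum_(i < (\max_i w i).+1) N ^+ i = 1.
  by apply: oppr_inj; rewrite -mulNr opprB -subrX1 raising_nilpotent // sub0r.
by case/mulmx1_unit.
Qed.

Lemma unitmx_submxblock (S : 'M[F]_m) (i : 'I_k) :
  S \in unitmx -> (forall l, l != i -> submxblock S i l = 0) ->
  submxblock S i i \in unitmx.
Proof.
move=> uS S_row; have := congr1 (fun M => submxblock M i i) (mulmxV uS).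
rewrite submxblock_scalar eqxx submxblock_mul (bigD1 i) //= [X in _ + X]big1.
  by rewrite [X in X = _ -> _]addr0 => /mulmx1_unit[].
by move=> l /S_row ->; rewrite mul0mx.
Qed.

End GradedUnits.

Lemma scalemxX (R : comPzRingType) p (c : R) (M : 'M[R]_p) e :
  (c *: M) ^+ e = c ^+ e *: M ^+ e.
Proof.
elim: e => [|e IHe]; first by rewrite !expr0 scale1r.
by rewrite !exprS IHe -!mulmxE -scalemxAl -scalemxAr scalerA.
Qed.

Lemma intertwine_conj (R : comUnitRingType) p (S X X' : 'M[R]_p) :
  S \in unitmx -> invmx S *m X *m S = X' -> X *m S = S *m X'.
Proof. by move=> uS <-; rewrite !mulmxA mulmxV // mul1mx. Qed.

Lemma unitmx_conj (R : comUnitRingType) p (S X : 'M[R]_p) :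
  S \in unitmx -> (invmx S *m X *m S \in unitmx) = (X \in unitmx).
Proof. by move=> uS; rewrite !unitmx_mul unitmx_inv uS andbT. Qed.

Section Intertwining.
Variables (R : pzRingType) (p : nat) (S : 'M[R]_p).
Implicit Types X Y : 'M[R]_p.

Lemma intertwineM X X' Y Y' :
  X *m S = S *m X' -> Y *m S = S *m Y' -> X *m Y *m S = S *m (X' *m Y').
Proof. by move=> eX eY; rewrite -mulmxA eY !mulmxA eX. Qed.

Lemma intertwineX X X' e : X *m S = S *m X' -> X ^+ e *m S = S *m X' ^+ e.
Proof.
move=> eX; elim: e => [|e IHe]; first by rewrite !expr0 mul1mx mulmx1.
by rewrite !exprSr -!mulmxE (intertwineM IHe eX).
Qed.

End Intertwining.

Lemma span2_of_entries (F : fieldType) p (X Y : 'M[F]_p) u1 v1 u2 v2 :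
  X u1 v1 = 1 -> Y u1 v1 = 0 -> X u2 v2 = 0 -> Y u2 v2 = 1 -> span2 X Y.
Proof.
move=> x1 y1 x2 y2; apply/eqP; rewrite eqn_leq rank_leq_row /=.
set Z := col_mx (mxvec X) (mxvec Y).
pose kk (l : 'I_2) := if l == 0 then mxvec_index u1 v1 else mxvec_index u2 v2.
pose Bm := \matrix_(k, l) ((k == kk l)%:R : F).
have key : Z *m Bm = 1%:M.
  apply/matrixP => i l; rewrite !mxE.
  rewrite (bigD1 (kk l)) //= {1}/Bm mxE eqxx mulr1 big1 ?addr0; last first.
    by move=> k /negbTE hk; rewrite /Bm mxE hk mulr0.
  case: i => [[|[|]]] // hi.
    have -> : Ordinal hi = lshift 1 (ord0 : 'I_1) by apply/val_inj.
    rewrite col_mxEu; case: l => [[|[|]]] // hl; rewrite /kk /= mxvecE //.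
  have -> : Ordinal hi = rshift 1 (ord0 : 'I_1) by apply/val_inj.
  rewrite col_mxEd; case: l => [[|[|]]] // hl; rewrite /kk /= mxvecE //.
by have := mxrankM_maxl Z Bm; rewrite key mxrank1.
Qed.

Lemma span2_of_blocks (F : fieldType) k n (X Y : 'M[F]_(\sum_(i < k) n)) i j i' j' :
  (0 < n)%N ->
  submxblock X i j = 1%:M -> submxblock Y i j = 0 ->
  submxblock X i' j' = 0 -> submxblock Y i' j' = 1%:M -> span2 X Y.
Proof.
move=> n_gt0 x1 y1 x2 y2; pose r0 : 'I_n := Ordinal n_gt0.
apply: (span2_of_entries (u1 := tagnat.Rank i r0) (v1 := tagnat.Rank j r0)
  (u2 := tagnat.Rank i' r0) (v2 := tagnat.Rank j' r0)).
- by have := congr1 (fun M : 'M[F]_n => M r0 r0) x1; rewrite !mxE eqxx.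
- by have := congr1 (fun M : 'M[F]_n => M r0 r0) y1; rewrite !mxE.
- by have := congr1 (fun M : 'M[F]_n => M r0 r0) x2; rewrite !mxE.
- by have := congr1 (fun M : 'M[F]_n => M r0 r0) y2; rewrite !mxE eqxx.
Qed.

Section Substitution.
Variables (F : fieldType) (k n : nat).
Local Notation m := (\sum_(i < k) n)%N.
Implicit Types (A B : 'M[F]_n) (P : 'I_k -> 'I_k -> ncpoly F).

Lemma mxsubst_blk_inj P A B j :
  mxsubst P A B *m blk_inj F n j = \mxcol_i nceval (P i j) A B.
Proof. by rewrite mul_blk_inj; apply/eq_mxcol => i; rewrite mxblockK. Qed.

Lemma nceval_conj (S : 'M[F]_n) (p : ncpoly F) A B : S \in unitmx ->
  invmx S *m nceval p A B *m S = nceval p (invmx S *m A *m S) (invmx S *m B *m S).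
Proof.
move=> uS; elim: p => [c| | |p IHp q IHq|p IHp q IHq] //=.
- by rewrite scalar_mxC -mulmxA mulVmx // mulmx1.
- by rewrite mulmxDr mulmxDl IHp IHq.
- by rewrite -IHp -IHq !mulmxA mulmxK.
Qed.

Lemma mxdiag_mul (D1 D2 : 'I_k -> 'M[F]_n) :
  \mxdiag_i D1 i *m \mxdiag_i D2 i = \mxdiag_i (D1 i *m D2 i).
Proof.
rewrite {1}/mxdiag mul_mxblock_mxdiag /mxdiag; apply/eq_mxblock => i j.
by case: eqVneq => [->|_]; rewrite ?conform_mx_id ?mul0mx.
Qed.

Lemma simpair_mxsubst A B A' B' : simpair A B A' B' ->
  exists2 D : 'M[F]_m, D \in unitmx &
    forall P, invmx D *m mxsubst P A B *m D = mxsubst P A' B'.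
Proof.
case=> S uS [eA eB].
pose D : 'M[F]_m := \mxdiag_(i < k) S.
pose Di : 'M[F]_m := \mxdiag_(i < k) invmx S.
have DDi : D *m Di = 1%:M by rewrite mxdiag_mul mulmxV // (mxdiagZ (p_ := fun _ => n)).
have [uD _] := mulmx1_unit DDi.
have eD : invmx D = Di by rewrite -[LHS]mulmx1 -DDi mulmxA mulVmx // mul1mx.
exists D => // P; rewrite eD /Di /D /mxsubst.
rewrite mul_mxdiag_mxblock mul_mxblock_mxdiag; apply/eq_mxblock => i j.
by rewrite nceval_conj // eA eB.
Qed.

Lemma simpair_space_sim P1 P2 A B A' B' : simpair A B A' B' ->
  space_sim (mxsubst P1 A B) (mxsubst P2 A B) (mxsubst P1 A' B') (mxsubst P2 A' B').
Proof.
move=> /simpair_mxsubst[D uD eD]; exists 1, 0, 0, 1.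
split; first by rewrite mulr1 mulr0 subr0 oner_eq0.
by exists D => //; rewrite !scale1r !scale0r addr0 add0r !eD.
Qed.

End Substitution.

Section Design.
Variable F : fieldType.

Definition next1 (j : nat) : nat := nth 9 [:: 1; 2; 4; 5; 6; 7; 8; 8] j.

(* [next1 8 = 9] is not a block index, so the last column of [P1] is zero. *)
Definition P1 (i j : 'I_9) : ncpoly F := NCconst (i == next1 j :> nat)%:R.

Definition P2 (i j : 'I_9) : ncpoly F :=
  match nat_of_ord i, nat_of_ord j with
  | 3, 0 | 5, 1 | 7, 2 | 8, 4 => NCconst 1
  | 6, 3 => NCx
  | 7, 3 => NCy
  | 8, 5 => NCadd NCx NCy
  | _, _ => NCconst 0
  end.

Definition design_wt (i : 'I_9) : nat := nth 0 [:: 0; 1; 2; 2; 3; 3; 4; 4; 5] i.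

Variable n : nat.
Local Notation m := (\sum_(i < 9) n)%N.
Local Notation raising := (raising design_wt).
Local Notation blk j := (blk_inj F n (inord j : 'I_9)).
Implicit Types A B : 'M[F]_n.

Lemma inord_eq9 (i : 'I_9) j : (j < 9)%N -> (i == inord j) = (i == j :> nat).
Proof. by move=> lt_j9; rewrite -val_eqE /= inordK. Qed.

Lemma mxsubst_P1_blk A B j : (j < 8)%N -> mxsubst P1 A B *m blk j = blk (next1 j).
Proof.
move=> lt_j8; have lt_j9 : (j < 9)%N by apply: ltnW.
have lt_next : (next1 j < 9)%N by case: j lt_j8 {lt_j9} => [|[|[|[|[|[|[|[|]]]]]]]].
rewrite (mxsubst_blk_inj P1 A B).
apply/eq_mxcol => i.
by rewrite /P1 inordK // inord_eq9 //; case: eqP => _ /=; rewrite ?mulr1n ?mulr0n ?raddf0.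
Qed.

Lemma mxsubst_P2_blk A B :
  [/\ mxsubst P2 A B *m blk 0 = blk 3, mxsubst P2 A B *m blk 1 = blk 5,
      mxsubst P2 A B *m blk 2 = blk 7 & mxsubst P2 A B *m blk 4 = blk 8].
Proof.
rewrite !(mxsubst_blk_inj P2 A B).
by split; apply/eq_mxcol => -[[|[|[|[|[|[|[|[|[|i]]]]]]]]] hi] //;
  rewrite /P2 !inord_eq9 // inordK //= ?raddf0.
Qed.

Lemma mxsubst_P2_blk_AB A B :
  mxsubst P2 A B *m blk 3 = blk 6 *m A + blk 7 *m B /\
  mxsubst P2 A B *m blk 5 = blk 8 *m (A + B).
Proof.
rewrite !(mxsubst_blk_inj P2 A B) !mxcol_mul -?mxcolD.
by split; apply/eq_mxcol => -[[|[|[|[|[|[|[|[|[|i]]]]]]]]] hi] //;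
  rewrite /P2 !inord_eq9 // inordK //= ?mul1mx ?mul0mx ?add0r ?addr0 ?raddf0.
Qed.

Lemma raisingM1 A B : raising 1 (mxsubst P1 A B).
Proof.
move=> i j; rewrite /mxsubst mxblockK /P1 /=; case: eqP => [eq_i|_ _]; last first.
  by rewrite mulr0n raddf0.
by move: i j eq_i => [i hi] [[|[|[|[|[|[|[|[|[|j]]]]]]]]] hj] //= eq_i; subst i.
Qed.

Lemma raisingM2 A B : raising 2 (mxsubst P2 A B).
Proof.
move=> i j; rewrite /mxsubst mxblockK /P2.
move: i j => [[|[|[|[|[|[|[|[|[|i]]]]]]]]] hi] [[|[|[|[|[|[|[|[|[|j]]]]]]]]] hj] //=;
  by rewrite raddf0.
Qed.

Lemma design_comm A B :
  mxsubst P1 A B *m mxsubst P2 A B = mxsubst P2 A B *m mxsubst P1 A B.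
Proof.
apply: mx_blk_injP => j; rewrite -!mulmxA.
have [lt_j4|le4j] := ltnP j 4; last first.
  have zero (M : 'M[F]_m) : raising 3 M -> M *m blk_inj F n j = 0.
    move=> rM; apply: (mul_blk_inj_raising_eq0 (R := F) rM) => i.
    by move: i j le4j => [[|[|[|[|[|[|[|[|[|i]]]]]]]]] hi] [[|[|[|[|[|[|[|[|[|j]]]]]]]]] hj].
  rewrite !mulmxA !zero //; first by apply: raisingM (raisingM2 A B) (raisingM1 A B).
  by apply: raisingM (raisingM1 A B) (raisingM2 A B).
have [e0 e1 e2 e4] := mxsubst_P2_blk A B; have [e3 e5] := mxsubst_P2_blk_AB A B.
rewrite -(inord_val j); case: (nat_of_ord j) lt_j4 => [|[|[|[|]]]] // _.
- by rewrite e0 !mxsubst_P1_blk //= e1.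
- by rewrite e1 !mxsubst_P1_blk //= e2.
- by rewrite e2 !mxsubst_P1_blk //= e4.
- by rewrite e3 mxsubst_P1_blk //= e5 mulmxDr !mulmxA !mxsubst_P1_blk //= -mulmxDr.
Qed.

Lemma design_powers A B :
  [/\ mxsubst P1 A B ^+ 3 *m blk 0 = blk 4, mxsubst P1 A B ^+ 4 *m blk 0 = blk 6
    & mxsubst P1 A B ^+ 5 *m blk 0 = blk 8].
Proof. by split; rewrite !exprS expr0 mulr1 -!mulmxE -!mulmxA !mxsubst_P1_blk. Qed.

Lemma design_mixed_words A B :
  [/\ mxsubst P1 A B ^+ 2 *m mxsubst P2 A B *m blk 0 = blk 7,
      mxsubst P1 A B ^+ 3 *m mxsubst P2 A B *m blk 0 = blk 8
    & mxsubst P2 A B ^+ 2 *m blk 0 = blk 6 *m A + blk 7 *m B].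
Proof.
have [e0 _ _ _] := mxsubst_P2_blk A B; have [e3 _] := mxsubst_P2_blk_AB A B.
by split; rewrite !exprS expr0 mulr1 -!mulmxE -!mulmxA e0 ?e3 // !mxsubst_P1_blk.
Qed.

Lemma blk_generated A B (l : 'I_9) : (0 < l)%N ->
  exists j, blk_inj F n l = mxsubst P1 A B *m blk_inj F n j \/
            blk_inj F n l = mxsubst P2 A B *m blk_inj F n j.
Proof.
have [e0 _ _ _] := mxsubst_P2_blk A B.
move=> l_gt0; rewrite -(inord_val l).
move: l l_gt0 => -[[|[|[|[|[|[|[|[|[|l]]]]]]]]] hl] //= _.
- by exists (inord 0); left; rewrite mxsubst_P1_blk.
- by exists (inord 1); left; rewrite mxsubst_P1_blk.
- by exists (inord 0); right; rewrite e0.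
- by exists (inord 2); left; rewrite mxsubst_P1_blk.
- by exists (inord 3); left; rewrite mxsubst_P1_blk.
- by exists (inord 4); left; rewrite mxsubst_P1_blk.
- by exists (inord 5); left; rewrite mxsubst_P1_blk.
- by exists (inord 6); left; rewrite mxsubst_P1_blk.
Qed.

Lemma design_wt_pos (l : 'I_9) : l != inord 0 -> (0 < design_wt l)%N.
Proof.
by rewrite inord_eq9 //; case: l => -[|[|[|[|[|[|[|[|[|l]]]]]]]]] hl.
Qed.

Lemma submxcol_blk_mul i j q (V : 'M[F]_(n, q)) : (i < 9)%N -> (j < 9)%N ->
  submxcol (blk j *m V) (inord i) = if i == j then V else 0.
Proof.
move=> lt_i9 lt_j9; rewrite -submxcol_mul submxcol_blk_inj inord_eq9 // inordK //.
by case: eqP; rewrite ?mul1mx ?mul0mx.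
Qed.

Section Leading.
Variables (A B : 'M[F]_n) (a b : F) (U : 'M[F]_(m, n)).
Local Notation M1 := (mxsubst P1 A B).
Local Notation M2 := (mxsubst P2 A B).
Local Notation X := (a *: M1 + b *: M2).
Local Notation U0 := (submxcol U (inord 0)).

Lemma raising_design_X : raising 1 X.
Proof. by apply: raisingD; apply: raisingZ; [apply: raisingM1 | apply: raisingW (raisingM2 A B)]. Qed.

Lemma raising_design_X_lead e : raising e.+1 (X ^+ e - (a *: M1) ^+ e).
Proof. by apply: raising_exprD_lead; apply: raisingZ; [apply: raisingM1 | apply: raisingM2]. Qed.

Lemma submxcol_lead_X e i : (design_wt i <= e)%N ->
  submxcol (X ^+ e *m U) i = a ^+ e *: (submxcol (M1 ^+ e *m blk 0) i *m U0).
Proof.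
move=> le_ie; rewrite (submxcol_leading design_wt_pos (r := e) (L := (a *: M1) ^+ e)) //.
- by rewrite scalemxX -scalemxAl submxcolZ -scalemxAl.
- by have := raisingX (e := e) (raisingZ a (raisingM1 A B)); rewrite mul1n.
exact: raising_design_X_lead.
Qed.

Lemma submxcol_lead_XY d e i : (design_wt i <= e + 2)%N ->
  submxcol (X ^+ e *m (d *: M2) *m U) i =
  (a ^+ e * d) *: (submxcol (M1 ^+ e *m M2 *m blk 0) i *m U0).
Proof.
move=> le_ie; have rY := raisingZ d (raisingM2 A B).
rewrite (submxcol_leading design_wt_pos (r := e + 2) (L := (a *: M1) ^+ e *m (d *: M2))) //.
- by rewrite scalemxX -scalemxAr -!scalemxAl !submxcolZ scalerA mulrC -scalemxAl.
- by have := raisingX (e := e) (raisingZ a (raisingM1 A B)); rewrite mul1n => /raisingM; apply.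
by rewrite -mulmxBl -addSn; apply: raisingM rY; apply: raising_design_X_lead.
Qed.

End Leading.

Section Intertwiner.
Variables (A B A' B' : 'M[F]_n) (S : 'M[F]_m) (a b d : F).
Local Notation M1 := (mxsubst P1 A B).
Local Notation M2 := (mxsubst P2 A B).
Local Notation N1 := (mxsubst P1 A' B').
Local Notation N2 := (mxsubst P2 A' B').
Local Notation X := (a *: M1 + b *: M2).
Local Notation Y := (d *: M2).
Local Notation P := (submxblock S (inord 0) (inord 0)).
Local Notation u := (S *m blk 0).
Hypotheses (eX : X *m S = S *m N1) (eY : Y *m S = S *m N2).

Lemma raising_design_Y : raising 2 Y.
Proof. exact/raisingZ/raisingM2. Qed.

Lemma intertwiner_row0 l : l != inord 0 -> submxblock S (inord 0) l = 0.
Proof.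
rewrite inord_eq9 // -lt0n => /(blk_generated A' B')[j [eN|eN]];
  rewrite -submxcol_mul_blk_inj eN mulmxA -?eX -?eY -mulmxA.
- by rewrite (submxcol_raising_eq0 _ (raising_design_X A B a b)) // /design_wt inordK.
- by rewrite (submxcol_raising_eq0 _ raising_design_Y) // /design_wt inordK.
Qed.

Lemma intertwiner_words :
  X ^+ 5 *m u = X ^+ 3 *m Y *m u /\
  Y ^+ 2 *m u = X ^+ 4 *m u *m A' + X ^+ 2 *m Y *m u *m B'.
Proof.
have [_ N1_4 N1_5] := design_powers A' B'.
have [N1_2N2 N1_3N2 N2_2] := design_mixed_words A' B'.
have XS e : X ^+ e *m S = S *m N1 ^+ e := intertwineX e eX.
have XYS e : X ^+ e *m Y *m S = S *m (N1 ^+ e *m N2) := intertwineM (XS e) eY.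
split; first by rewrite !mulmxA XS XYS -[LHS]mulmxA -[RHS]mulmxA N1_5 N1_3N2.
rewrite [LHS]mulmxA (intertwineX 2 eY) -[LHS]mulmxA N2_2 -N1_4 -N1_2N2 mulmxDr.
by rewrite ![_ *m (S *m _)]mulmxA XS XYS !mulmxA.
Qed.

Lemma intertwiner_coeffs :
  [/\ a ^+ 5 *: P = (a ^+ 3 * d) *: P,
      d ^+ 2 *: (A *m P) = a ^+ 4 *: (P *m A') &
      d ^+ 2 *: (B *m P) = (a ^+ 2 * d) *: (P *m B')].
Proof.
have [_ M1_4 M1_5] := design_powers A B.
have [M1_2M2 M1_3M2 M2_2] := design_mixed_words A B.
have [E8 E67] := intertwiner_words.
have u0 : submxcol u (inord 0) = P by rewrite submxcol_mul_blk_inj.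
have Y2 i : (design_wt i <= 4)%N ->
    submxcol (Y ^+ 2 *m u) i = d ^+ 2 *: (submxcol (M2 ^+ 2 *m blk 0) i *m P).
  move=> le_i4; rewrite (submxcol_leading_self design_wt_pos (r := 4)) ?u0 //.
    by rewrite scalemxX -scalemxAl submxcolZ -scalemxAl.
  by have := raisingX (e := 2) raising_design_Y.
have wt8 : design_wt (inord 8) = 5 by rewrite /design_wt inordK.
have col67 i : design_wt i = 4 ->
    d ^+ 2 *: (submxcol (blk 6 *m A + blk 7 *m B) i *m P) =
    a ^+ 4 *: (submxcol (blk 6) i *m P) *m A' +
    (a ^+ 2 * d) *: (submxcol (blk 7) i *m P) *m B'.
  move=> wt_i; have := congr1 (fun V => submxcol V i) E67.
  rewrite /= submxcolD -[submxcol (_ *m A') _]submxcol_mul.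
  rewrite -[submxcol (_ *m B') _]submxcol_mul.
  by rewrite Y2 ?submxcol_lead_X ?submxcol_lead_XY ?wt_i // M2_2 M1_4 M1_2M2 u0.
split.
- have := congr1 (fun V => submxcol V (inord 8)) E8.
  by rewrite /= submxcol_lead_X ?submxcol_lead_XY ?wt8 // M1_5 M1_3M2 u0
    submxcol_blk_inj eqxx mul1mx.
- have := col67 (inord 6); rewrite /design_wt inordK // submxcolD !submxcol_blk_mul //.
  rewrite !submxcol_blk_inj !inord_eq9 // !inordK //= addr0 mul1mx mul0mx.
  by rewrite scaler0 mul0mx addr0 -scalemxAl => ->.
have := col67 (inord 7); rewrite /design_wt inordK // submxcolD !submxcol_blk_mul //.
rewrite !submxcol_blk_inj !inord_eq9 // !inordK //= add0r mul1mx mul0mx.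
by rewrite scaler0 mul0mx add0r -scalemxAl => ->.
Qed.

Hypotheses (n_gt0 : (0 < n)%N) (uS : S \in unitmx) (a_neq0 : a != 0).

Lemma intertwiner_simpair : simpair A B A' B'.
Proof.
have uP : P \in unitmx := unitmx_submxblock uS intertwiner_row0.
have [eP hA hB] := intertwiner_coeffs.
have P_neq0 : P != 0 by apply: contraTneq uP => ->; apply: unitmx0F.
have a4_neq0 : a ^+ 4 != 0 by rewrite expf_neq0.
have ed : d = a ^+ 2.
  move/eqP: eP; rewrite -subr_eq0 -scalerBl scaler_eq0 (negbTE P_neq0) orbF.
  have -> : a ^+ 5 = a ^+ 3 * a ^+ 2 by rewrite -exprD.
  rewrite -mulrBr mulf_eq0 expf_eq0 (negbTE a_neq0) /= subr_eq0.
  by move/eqP.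
have a22 : (a ^+ 2) ^+ 2 = a ^+ 4 by rewrite -exprM.
have a2a2 : a ^+ 2 * a ^+ 2 = a ^+ 4 by rewrite -exprD.
rewrite ed a22 in hA; rewrite ed a22 a2a2 in hB.
move/(scalerI a4_neq0): hA => hA; move/(scalerI a4_neq0): hB => hB.
by exists P => //; split; rewrite -mulmxA ?hA ?hB mulKmx.
Qed.

End Intertwiner.

Lemma design_sum_gt0 : (0 < n)%N -> (0 < m)%N.
Proof. by move=> n_gt0; rewrite big_ord_recl addn_gt0 n_gt0. Qed.

Lemma mxsubst_P2_cube A B : mxsubst P2 A B ^+ 3 = 0.
Proof.
apply: (raising_eq0 _ (raisingX (e := 3) (raisingM2 A B))).
by case=> -[|[|[|[|[|[|[|[|[|i]]]]]]]]].
Qed.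

Lemma design_blocks A B :
  [/\ submxblock (mxsubst P1 A B) (inord 1) (inord 0) = 1%:M,
      submxblock (mxsubst P2 A B) (inord 1) (inord 0) = 0,
      submxblock (mxsubst P1 A B) (inord 3) (inord 0) = 0 &
      submxblock (mxsubst P2 A B) (inord 3) (inord 0) = 1%:M].
Proof.
have [e0 _ _ _] := mxsubst_P2_blk A B.
by split; rewrite -submxcol_mul_blk_inj ?mxsubst_P1_blk ?e0 // submxcol_blk_inj inord_eq9 ?inordK.
Qed.

Lemma design_space_sim_simpair A B A' B' : (0 < n)%N ->
  space_sim (mxsubst P1 A B) (mxsubst P2 A B) (mxsubst P1 A' B') (mxsubst P2 A' B') ->
  simpair A B A' B'.
Proof.
move=> n_gt0 [a [b [c [d [det_neq0 [S uS [/(intertwine_conj uS) eX /(intertwine_conj uS) eY]]]]]]].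
have c_eq0 : c = 0.
  have Y3 : (c *: mxsubst P1 A B + d *: mxsubst P2 A B) ^+ 3 = 0.
    by rewrite -[LHS](mulmxK uS) (intertwineX 3 eY) mxsubst_P2_cube mulmx0 mul0mx.
  have [M1_3 _ _] := design_powers A B.
  have := congr1 (fun V => submxcol (V *m blk 0) (inord 4)) Y3.
  rewrite /= submxcol_lead_X ?M1_3 /design_wt ?inordK // mul0mx submxcol0.
  rewrite !submxcol_blk_inj !eqxx mulmx1 => /eqP.
  rewrite scaler_eq0 expf_eq0 /= => /orP[/eqP //|].
  by case: n n_gt0 => // n' _; rewrite (negbTE (matrix_nonzero1 _ _)).
have a_neq0 : a != 0.
  by apply: contraNneq det_neq0 => ->; rewrite c_eq0 !mul0r mulr0 subrr.
rewrite c_eq0 scale0r add0r in eY.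
exact: intertwiner_simpair eX eY n_gt0 uS a_neq0.
Qed.

Lemma design_unitmx c (N : 'M[F]_m) : (0 < n)%N -> raising 1 N ->
  (c%:M + N \in unitmx) = (c != 0).
Proof. by move/design_sum_gt0; apply: unitmx_scalar_add_raising. Qed.

Lemma design_nonunit (N : 'M[F]_m) : (0 < n)%N -> raising 1 N -> N \notin unitmx.
Proof.
by move=> n_gt0 rN; rewrite -[N]add0r -[X in X + N](raddf0 (@scalar_mx F m)) design_unitmx ?eqxx.
Qed.

Definition Q1 (i j : 'I_9) : ncpoly F := NCadd (NCconst (i == j)%:R) (P1 i j).

Lemma mxsubst_Q1 A B : mxsubst Q1 A B = 1%:M + mxsubst P1 A B.
Proof.
apply/mxblockP => i j; rewrite submxblockD submxblock_scalar /mxsubst !mxblockK /=.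
by case: eqP; rewrite ?raddf0.
Qed.

Lemma design_comm_space A B : (0 < n)%N ->
  comm_space (mxsubst P1 A B) (mxsubst P2 A B).
Proof.
move=> n_gt0; split; last exact: design_comm.
by have [x1 y1 x2 y2] := design_blocks A B; apply: (span2_of_blocks n_gt0 x1 y1 x2 y2).
Qed.

Lemma design_comm_space_nonsing A B : (0 < n)%N ->
  comm_space_nonsing (mxsubst Q1 A B) (mxsubst P2 A B).
Proof.
move=> n_gt0; rewrite mxsubst_Q1; split; last first.
  exists 1, 0; rewrite scale1r scale0r addr0 design_unitmx ?oner_neq0 //.
  exact: raisingM1.
split; last by rewrite mulmxDl mulmxDr mul1mx mulmx1 design_comm.
have [x1 y1 x2 y2] := design_blocks A B.
apply: (span2_of_blocks n_gt0 _ y1 _ y2); rewrite submxblockD submxblock_scalar.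
  by rewrite x1 inord_eq9 // inordK // add0r.
by rewrite x2 inord_eq9 // inordK // addr0.
Qed.

Lemma design_nonsing_space_sim_simpair A B A' B' : (0 < n)%N ->
  space_sim (mxsubst Q1 A B) (mxsubst P2 A B) (mxsubst Q1 A' B') (mxsubst P2 A' B') ->
  simpair A B A' B'.
Proof.
move=> n_gt0 [a [b [c [d [_ [S uS []]]]]]].
rewrite !mxsubst_Q1 !scalerDr !scale_scalar_mx !mulr1 -!addrA.
set X := a *: _ + _; set Y := c *: _ + _; set N1 := mxsubst P1 A' B' => eX eY.
have rX : raising 1 X by apply: raising_design_X.
have c_eq0 : c = 0.
  apply/eqP/negPn; rewrite -(design_unitmx _ n_gt0 (raising_design_X A B c d)).
  rewrite -(unitmx_conj _ uS) eY design_nonunit //.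
  exact: raisingW (raisingM2 A' B').
have eX1 : invmx S *m ((a - 1)%:M + X) *m S = N1.
  rewrite raddfB /= addrAC mulmxBr mulmxBl mulmx1 mulVmx // eX.
  by rewrite addrC addKr.
have a_eq1 : a = 1.
  apply/eqP/negPn; rewrite -subr_eq0 -(design_unitmx _ n_gt0 rX).
  by rewrite -(unitmx_conj _ uS) eX1 design_nonunit //; apply: raisingM1.
move: eX1 eY; rewrite /X /Y a_eq1 c_eq0 subrr !raddf0 scale0r !add0r.
move=> /(intertwine_conj uS) eX1 /(intertwine_conj uS) eY.
exact: intertwiner_simpair eX1 eY n_gt0 uS (oner_neq0 F).
Qed.

End Design.

Theorem theorem1 (F : fieldType) :
  wild (@comm_space F) (@space_sim F) /\
  ((exists a : F, a != 0 /\ a != 1) ->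
   wild (@comm_space_nonsing F) (@space_sim F)).
Proof.
split=> [|_].
  exists 9, (@P1 F), (@P2 F); split=> [n A B|n A B A' B'] n_gt0.
    exact: design_comm_space.
  by split; [apply: design_space_sim_simpair | apply: simpair_space_sim].
exists 9, (@Q1 F), (@P2 F); split=> [n A B|n A B A' B'] n_gt0.
  exact: design_comm_space_nonsing.
by split; [apply: design_nonsing_space_sim_simpair | apply: simpair_space_sim].
Qed.
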